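(* For natural concepts $C_1,C_2,D_1,D_2,E_1,E_2$: $\{C_1:D_1::D_2:C_2,\ C_1:E_1::E_2:C_2\}\models D_1:E_1::E_2:D_2$.
   Context: Concepts: $C,D::=\top\mid\bot\mid A\mid C\sqcap D\mid \exists r.C\mid N$; natural concepts: $N,N'::=A'\mid N\sqcap N'\mid N\bowtie N'\mid \exists r'.N$, with $A$ a concept name, $A'$ a natural concept name, $r$ a role name, $r'$ an intra-domain role name. A domain constrained interpretation is $\mathfrak{I}=(\mathcal{I},[\mathcal{F}_1,\dots,\mathcal{F}_k],\mathcal{X},\pi,\sim,\mathcal{S})$ where $\mathcal{I}=(\Delta^{\mathcal{I}},\cdot^{\mathcal{I}})$ is a classical DL interpretation, $[\mathcal{F}_1,\dots,\mathcal{F}_k]$ partitions a nonempty finite set $\mathcal{F}$, $\mathcal{X}\subseteq2^{\mathcal{F}}$ with $\mathcal{F}\in\mathcal{X}$, $\pi:\Delta^{\mathcal{I}}\to2^{\mathcal{F}}$, $\sim$ an equivalence relation on $\{1,\dots,k\}$, $\mathcal{S}=\{\sigma_{(s,t)}\mid(s,t)\in\sim\}$ with $\sigma_{(s,t)}:\mathcal{F}_s\to\mathcal{F}_t$ bijections. With $\mathcal{C}=\{G\subseteq\mathcal{F}\mid X\not\subseteq G\ \forall X\in\mathcal{X}\}$ and $\mathcal{C}^i=\{G\in\mathcal{C}\mid G\subseteq\mathcal{F}_i\}$ it is required: (1) $X\not\subseteq\pi(d)$ for all $d$, $X\in\mathcal{X}$; (2) each $G\in\mathcal{C}$ is $\pi(d)$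 for some $d$; (3) $\sigma_{(s,t)}^{-1}=\sigma_{(t,s)}$, $\sigma_{(t,u)}\circ\sigma_{(s,t)}=\sigma_{(s,u)}$; (4) $\sigma_{(i,j)}(G)\in\mathcal{C}$ for $G\in\mathcal{C}^i$, $(i,j)\in\sim$; (5) $\{f,g\}\in\mathcal{X}$ whenever $f\in\mathcal{F}_i$, $g\in\mathcal{F}_j$, $(i,j)\in\sim$, $i\neq j$. $\varphi(C)=\bigcap\{\pi(d)\mid d\in C^{\mathcal{I}}\}$ ($=\mathcal{F}$ if $C^{\mathcal{I}}=\emptyset$). Concepts are interpreted as usual, with $(N\bowtie N')^{\mathcal{I}}=\{d\mid\varphi(N)\cap\varphi(N')\subseteq\pi(d)\}$. An intra-domain relation $r$: there is $\kappa_r:2^{\mathcal{F}}\to2^{\mathcal{F}}$ with $(\exists r.C)^{\mathcal{I}}=\{d\mid\kappa_r(\varphi(C))\subseteq\pi(d)\}$ for all $C$, $\kappa_r(G)=\bigcup_i\kappa_r(G\cap\mathcal{F}_i)$ for $G\in\mathcal{C}$, $\kappa_r(G)\subseteq\mathcal{F}_i$ for $G\in\mathcal{C}^i$, $\kappa_r(\sigma_{(i,j)}(G))=\sigma_{(i,j)}(\kappa_r(G))$ for $(i,j)\in\sim$, $G\in\mathcal{C}^i$, and $\kappa_r(G)\neq\emptyset$ for $G\in\mathcal{C}^i\setminus\{\emptyset\}$. $\delta(C)=\{i\mid\mathcal{F}_i\cap\varphi(C)\neq\emptyset\}$. For $U=\{(s_1,t_1),\dots,(s_l,t_l)\}\subseteq\sim$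 with pairwise distinct $s_i$ and pairwise distinct $t_i$, the domain translation $\sigma_U:\mathcal{F}\to\mathcal{F}$ maps $f\in\mathcal{F}_{s_i}$ to $\sigma_{(s_i,t_i)}(f)$ and fixes all other features; $\mathrm{src}(U)=\{s_i\}$, $\mathrm{tgt}(U)=\{t_i\}$. $\mu(C,D)$ is the set of $\sigma_U$ with $\varphi(D)=\sigma_U(\varphi(C))$, $\mathrm{src}(U)\subseteq\delta(C)$, $\mathrm{tgt}(U)\cap(\delta(C)\setminus\mathrm{src}(U))=\emptyset$. An analogy assertion $C_1:C_2::D_1:D_2$ (between natural concepts) is satisfied in $\mathfrak{I}$ iff $\mu(C_1,C_2)\cap\mu(D_1,D_2)\neq\emptyset$; a concept inclusion $C\sqsubseteq D$ is satisfied iff $C^{\mathcal{I}}\subseteq D^{\mathcal{I}}$. A TBox is a finite set of concept inclusions and analogy assertions. $\mathfrak{I}$ is a model of a TBox $\mathcal{T}$ if it satisfies all its elements, every natural concept $N$ in $\mathcal{T}$ satisfies $N^{\mathcal{I}}=\{d\mid\varphi(N)\subseteq\pi(d)\}$, and every intra-domain role name is interpreted as an intra-domain relation. $\mathcal{T}\models\psi$ means every model of $\mathcal{T}$ satisfies $\psi$. *)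

From Stdlib Require Import Classical ClassicalEpsilon List.
From mathcomp Require Import all_boot.
Set Implicit Arguments. Unset Strict Implicit. Unset Printing Implicit Defensive.

Definition pb (P : Prop) : bool :=
  if excluded_middle_informative P then true else false.

(* Natural concepts  N ::= A' | N ⊓ N' | N ⋈ N' | ∃r'.N
   (A' natural concept names, r' intra-domain role names, both indexed by nat) *)
Inductive natural : Type :=
| NName of nat
| NAnd of natural & natural
| NBow of natural & natural
| NEx of nat & natural.

Inductive role : Type := RN of nat | IRN of nat.

Inductive concept : Type :=
| CTop | CBot
| CName of nat
| CAnd of concept & concept
| CEx of role & concept
| CNat of natural.

(* TBox elements: concept inclusions and analogy assertions N1:N2::N3:N4 *)
Inductive axiom : Type :=
| CI of concept & concept
| AA of natural & natural & natural & natural.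

Definition tbox := list axiom.

Fixpoint nat_subs (N : natural) : list natural :=
  N :: match N with
       | NName _ => nil
       | NAnd a b | NBow a b => nat_subs a ++ nat_subs b
       | NEx _ a => nat_subs a
       end.

Fixpoint concept_nats (C : concept) : list natural :=
  match C with
  | CTop | CBot | CName _ => nil
  | CAnd a b => concept_nats a ++ concept_nats b
  | CEx _ a => concept_nats a
  | CNat N => nat_subs N
  end.

Definition axiom_nats (a : axiom) : list natural :=
  match a with
  | CI C D => concept_nats C ++ concept_nats D
  | AA a b c d => nat_subs a ++ nat_subs b ++ nat_subs c ++ nat_subs d
  end.

Section Semantics.
Variables (Dl : Type) (F : finType) (k : nat).

Definition blockF (blk : F -> 'I_k) (i : 'I_k) : {set F} := [set f | blk f == i].

Definition consistent (Xs : {set {set F}}) (G : {set F}) : bool :=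
  [forall Y in Xs, ~~ (Y \subset G)].

(* Domain constrained interpretation (I, [F_1..F_k], 𝒳, π, ~, 𝒮) *)
Record dci := DCI {
  (* classical interpretation I = (Δ, ·^I), Δ = Dl *)
  dom_ne : inhabited Dl;
  cI : nat -> Dl -> Prop;            (* concept names *)
  nI : nat -> Dl -> Prop;            (* natural concept names *)
  rI : nat -> Dl -> Dl -> Prop;      (* ordinary role names *)
  iI : nat -> Dl -> Dl -> Prop;      (* intra-domain role names *)
  (* features: F nonempty finite, partitioned into nonempty blocks F_1..F_k *)
  F_ne : 0 < #|F|;
  blk : F -> 'I_k;
  blk_ne : forall i : 'I_k, exists f, blk f = i;
  Xs : {set {set F}};
  X_full : [set: F] \in Xs;
  piF : Dl -> {set F};
  sim : 'I_k -> 'I_k -> Prop;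
  sim_refl : forall i, sim i i;
  sim_sym : forall i j, sim i j -> sim j i;
  sim_trans : forall i j l, sim i j -> sim j l -> sim i l;
  sgm : 'I_k -> 'I_k -> F -> F;       (* sgm s t = σ_(s,t), meaningful on F_s *)
  sgm_into : forall s t, sim s t -> forall f, blk f = s -> blk (sgm s t f) = t;
  sgm_inj : forall s t, sim s t -> forall f g, blk f = s -> blk g = s ->
              sgm s t f = sgm s t g -> f = g;
  sgm_surj : forall s t, sim s t -> forall g, blk g = t ->
              exists f, blk f = s /\ sgm s t f = g;
  cond1 : forall d Y, Y \in Xs -> ~~ (Y \subset piF d);
  cond2 : forall G, consistent Xs G -> exists d, piF d = G;
  cond3_inv : forall s t, sim s t -> forall g, blk g = t -> sgm s t (sgm t s g) = g;
  cond3_comp : forall s t u, sim s t -> sim t u -> forall f, blk f = s ->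
              sgm t u (sgm s t f) = sgm s u f;
  cond4 : forall i j G, sim i j -> consistent Xs G -> G \subset blockF blk i ->
              consistent Xs (sgm i j @: G);
  cond5 : forall i j f g, sim i j -> i <> j -> blk f = i -> blk g = j ->
              [set f; g] \in Xs
}.

Variable I : dci.

(* φ of an extension: intersection of the π(d), d in the extension (F if empty) *)
Definition phi_of (S : Dl -> Prop) : {set F} :=
  [set f | pb (forall d, S d -> f \in piF I d)].

Fixpoint nat_ext (N : natural) : Dl -> Prop :=
  match N with
  | NName a => nI I a
  | NAnd a b => fun d => nat_ext a d /\ nat_ext b d
  | NBow a b => fun d => phi_of (nat_ext a) :&: phi_of (nat_ext b) \subset piF I d
  | NEx r a => fun d => exists e, iI I r d e /\ nat_ext a e
  end.

Definition role_ext (r : role) : Dl -> Dl -> Prop :=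
  match r with RN n => rI I n | IRN n => iI I n end.

Fixpoint ext (C : concept) : Dl -> Prop :=
  match C with
  | CTop => fun _ => True
  | CBot => fun _ => False
  | CName a => cI I a
  | CAnd a b => fun d => ext a d /\ ext b d
  | CEx r a => fun d => exists e, role_ext r d e /\ ext a e
  | CNat N => nat_ext N
  end.

Definition phi (C : concept) : {set F} := phi_of (ext C).
Definition phiN (N : natural) : {set F} := phi_of (nat_ext N).

Definition intra_domain (R : Dl -> Dl -> Prop) : Prop :=
  exists kap : {set F} -> {set F},
    (forall C d, (exists e, R d e /\ ext C e) <-> kap (phi C) \subset piF I d) /\
    (forall G, consistent (Xs I) G ->
        kap G = \bigcup_(i : 'I_k) kap (G :&: blockF (blk I) i)) /\
    (forall i G, consistent (Xs I) G -> G \subset blockF (blk I) i ->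
        kap G \subset blockF (blk I) i) /\
    (forall i j G, sim I i j -> consistent (Xs I) G -> G \subset blockF (blk I) i ->
        kap (sgm I i j @: G) = sgm I i j @: kap G) /\
    (forall i G, consistent (Xs I) G -> G \subset blockF (blk I) i -> G != set0 ->
        kap G != set0).

Definition delta (N : natural) : {set 'I_k} :=
  [set i : 'I_k | blockF (blk I) i :&: phiN N != set0].

Definition validU (U : {set 'I_k * 'I_k}) : Prop :=
  (forall p, p \in U -> sim I p.1 p.2) /\
  (forall p q, p \in U -> q \in U -> p.1 = q.1 -> p = q) /\
  (forall p q, p \in U -> q \in U -> p.2 = q.2 -> p = q).

Definition transl (U : {set 'I_k * 'I_k}) (f : F) : F :=
  match [pick t | (blk I f, t) \in U] with
  | Some t => sgm I (blk I f) t f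
  | None => f
  end.

Definition src (U : {set 'I_k * 'I_k}) : {set 'I_k} := [set p.1 | p in U].
Definition tgt (U : {set 'I_k * 'I_k}) : {set 'I_k} := [set p.2 | p in U].

Definition in_mu (C D : natural) (g : F -> F) : Prop :=
  exists U, validU U /\ g =1 transl U /\
    phiN D = transl U @: phiN C /\
    src U \subset delta C /\
    tgt U :&: (delta C :\: src U) = set0.

Definition sat_analogy (C1 C2 D1 D2 : natural) : Prop :=
  exists g, in_mu C1 C2 g /\ in_mu D1 D2 g.

Definition sat_axiom (a : axiom) : Prop :=
  match a with
  | CI C D => forall d, ext C d -> ext D d
  | AA a b c d => sat_analogy a b c d
  end.

Definition model (T : tbox) : Prop :=
  (forall a, In a T -> sat_axiom a) /\
  (forall N, (exists a, In a T /\ In N (axiom_nats a)) ->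
      forall d, nat_ext N d <-> phiN N \subset piF I d) /\
  (forall n, intra_domain (iI I n)).

End Semantics.

Definition entails (T : tbox) (psi : axiom) : Prop :=
  forall (Dl : Type) (F : finType) (k : nat) (I : dci Dl F k),
    model I T -> sat_axiom I psi.

From Stdlib Require Import List Classical ClassicalEpsilon.
From mathcomp Require Import all_boot.
Set Implicit Arguments. Unset Strict Implicit. Unset Printing Implicit Defensive.

(* A domain translation acts blockwise: it carries each feature to the feature
   corresponding to it, under the bijections sigma, in another block of the same
   similarity class.  By conditions (1) and (5), phi(N) is either all of F (when N
   has no instances) or separated: it meets each similarity class in at most one
   block.

   Let g be in mu(C1,D1) and mu(D2,C2), and h in mu(C1,E1) and mu(E2,C2).
   Translations are injective on the sets they translate, so cardinality decides
   which of these sets are F.  If phi(C1) or phi(D2) is F, a translation of F fixes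
   every separated set it also translates, whence phi(D1) = phi(E1) and
   phi(E2) = phi(D2), and the identity is a witness.  Otherwise phi(C1), phi(D2)
   and phi(E2) are separated, and the witness is h o g^-1 at the level of blocks:
   the translation sending the block of g c to that of h c, for c in phi(C1).  It
   maps phi(D1) = g phi(C1) onto h phi(C1) = phi(E1).  A block moved by g meets
   both phi(C1) and phi(D2), and one moved by h meets phi(C1) and phi(E2); with
   separation this shows that the witness sends e to d whenever h e = g d, hence
   maps phi(E2) onto phi(D2). *)

Section Translations.
Variables (Dl : Type) (F : finType) (k : nat) (I : dci Dl F k).

Local Notation bl := (blk I).
Local Notation sg := (sgm I).
Local Notation sm := (sim I).

Lemma sgm_id s f : bl f = s -> sg s s f = f.
Proof.
move=> fs; have ss := sim_refl I s.
apply: (sgm_inj ss) => //; first exact: sgm_into.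
by rewrite cond3_comp.
Qed.

Definition corresponds (x y : F) : Prop := sm (bl x) (bl y) /\ y = sg (bl x) (bl y) x.

Lemma corresponds_refl x : corresponds x x.
Proof. by split; [exact: sim_refl | rewrite sgm_id]. Qed.

Lemma corresponds_sym x y : corresponds x y -> corresponds y x.
Proof.
case=> xy Ey; split; first exact: sim_sym.
by rewrite {2}Ey cond3_inv //; exact: sim_sym.
Qed.

Lemma corresponds_trans x y z : corresponds x y -> corresponds y z -> corresponds x z.
Proof.
case=> xy Ey [yz Ez]; have xz := sim_trans xy yz.
by split => //; rewrite {1}Ez {2}Ey cond3_comp.
Qed.

Lemma corresponds_blk_inj x y z :
  corresponds x y -> corresponds x z -> bl y = bl z -> y = z.
Proof. by case=> _ Ey [_ Ez] Eyz; rewrite Ey Ez Eyz. Qed.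

Lemma mem_src (U : {set 'I_k * 'I_k}) i : i \in src U <-> exists t, (i, t) \in U.
Proof.
split; first by case/imsetP=> [[a b] ab ->]; exists b.
by case=> t it; apply/imsetP; exists (i, t).
Qed.

Lemma mem_tgt (U : {set 'I_k * 'I_k}) i : i \in tgt U <-> exists s, (s, i) \in U.
Proof.
split; first by case/imsetP=> [[a b] ab ->]; exists a.
by case=> s si; apply/imsetP; exists (s, i).
Qed.

Section ValidU.
Variable U : {set 'I_k * 'I_k}.
Hypothesis validU_U : validU I U.

Lemma transl_in f t : (bl f, t) \in U -> transl I U f = sg (bl f) t f.
Proof.
case: validU_U => _ [src_inj _] ft; rewrite /transl; case: pickP => [t' ft'|].
  by have [->] := src_inj _ _ ft' ft erefl.
by move/(_ t); rewrite ft.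
Qed.

Lemma transl_out f : bl f \notin src U -> transl I U f = f.
Proof.
move=> nsrc; rewrite /transl; case: pickP => [t ft|//].
by case/negP: nsrc; apply/mem_src; exists t.
Qed.

Lemma transl_blk_in f t : (bl f, t) \in U -> bl (transl I U f) = t.
Proof.
move=> ft; have /= ft_sim := validU_U.1 _ ft.
by rewrite (transl_in ft) (sgm_into ft_sim erefl).
Qed.

Lemma transl_src f : bl f \in src U -> (bl f, bl (transl I U f)) \in U.
Proof. by case/mem_src=> t ft; rewrite (transl_blk_in ft). Qed.

Lemma transl_corresponds f : corresponds f (transl I U f).
Proof.
have [/mem_src [t ft] | /transl_out ->] := boolP (bl f \in src U).
  by split; rewrite (transl_blk_in ft); [exact: validU_U.1 _ ft | exact: transl_in].
exact: corresponds_refl.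
Qed.

Lemma transl_blk f f' : bl f = bl f' -> bl (transl I U f) = bl (transl I U f').
Proof.
move=> ff'; have [/mem_src [t ft] | nsrc] := boolP (bl f \in src U).
  by rewrite (transl_blk_in ft) (transl_blk_in (t := t)) // -ff'.
by rewrite !transl_out // -ff'.
Qed.

End ValidU.

Definition blocks (Q : {set F}) : {set 'I_k} := bl @: Q.

Definition admissible (Q : {set F}) (U : {set 'I_k * 'I_k}) : Prop :=
  [/\ validU I U, src U \subset blocks Q & tgt U :&: (blocks Q :\: src U) = set0].

Definition translation_on (Q : {set F}) (g : F -> F) : Prop :=
  exists2 U, admissible Q U & g =1 transl I U.

Definition translates (g : F -> F) (Q Q' : {set F}) : Prop :=
  translation_on Q g /\ Q' = g @: Q.

Section TranslationOn.
Variables (Q : {set F}) (g : F -> F).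
Hypothesis gQ : translation_on Q g.

Lemma translation_corresponds f : corresponds f (g f).
Proof. by case: gQ => U [validU_U _ _] ->; exact: transl_corresponds. Qed.

Lemma translation_sim f : sm (bl f) (bl (g f)).
Proof. exact: (translation_corresponds f).1. Qed.

Lemma translation_blk f f' : bl f = bl f' -> bl (g f) = bl (g f').
Proof. by case: gQ => U [validU_U _ _] gU; rewrite !gU; exact: transl_blk. Qed.

Lemma translation_moved f : bl (g f) <> bl f -> bl f \in blocks Q.
Proof.
case: gQ => U [_ srcQ _] gU moved; apply: (subsetP srcQ); apply: contraT => nsrc.
by case: moved; rewrite gU transl_out.
Qed.

Lemma translation_blk_inj :
  {in Q &, forall x x', bl (g x) = bl (g x') -> bl x = bl x'}.
Proof.
case: gQ => U [validU_U _ tgtQ] gU.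
have src_tgt y : y \in Q -> (bl y \in src U) = (bl (g y) \in tgt U).
  move=> yQ; apply/idP/idP => [/(transl_src validU_U) yU | ytgt].
    by rewrite gU; apply/mem_tgt; exists (bl y).
  apply: contraT => nsrc; move: ytgt; rewrite gU (transl_out nsrc) => ytgt.
  have : bl y \in tgt U :&: (blocks Q :\: src U) by rewrite !inE ytgt nsrc imset_f.
  by rewrite tgtQ inE.
move=> x x' xQ x'Q Egx; have [xsrc | nsrc] := boolP (bl x \in src U).
  have x'src : bl x' \in src U by rewrite src_tgt // -Egx -src_tgt.
  have [_ [_ tgt_inj]] := validU_U.
  move: (transl_src validU_U xsrc) (transl_src validU_U x'src); rewrite -!gU Egx.
  by move=> xU x'U; have [] := tgt_inj _ _ xU x'U erefl.
have nsrc' : bl x' \notin src U by rewrite src_tgt // -Egx -src_tgt.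
by move: Egx; rewrite !gU !transl_out.
Qed.

Lemma translation_inj : {in Q &, injective g}.
Proof.
move=> x x' xQ x'Q Egx; apply: (corresponds_blk_inj (corresponds_refl x)).
  apply: corresponds_trans (translation_corresponds x) _.
  by rewrite Egx; apply: corresponds_sym; exact: translation_corresponds.
exact: translation_blk_inj xQ x'Q (congr1 bl Egx).
Qed.

End TranslationOn.

Lemma translates_card g Q Q' : translates g Q Q' -> #|Q'| = #|Q|.
Proof. by case=> gQ ->; apply: card_in_imset; exact: translation_inj gQ. Qed.

Lemma translates_setT g Q Q' : translates g Q Q' -> (Q' = setT <-> Q = setT).
Proof.
move/translates_card => EQ.
split=> [Q'T | QT]; apply/eqP; rewrite eqEcard subsetT /=.
  by rewrite -EQ Q'T.
by rewrite EQ QT.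
Qed.

Lemma translates_id Q : translates id Q Q.
Proof.
split; last by rewrite imset_id.
have transl0 : transl I set0 =1 id.
  by move=> f; apply: transl_out; apply/negP => /mem_src [t]; rewrite inE.
exists set0 => //; split.
- by split; [|split] => p; rewrite inE.
- by apply/subsetP => i /mem_src [t]; rewrite inE.
- by apply/setP => i; rewrite !inE; apply/negP => /andP [/mem_tgt [s]]; rewrite inE.
Qed.

Definition separated (Q : {set F}) : Prop :=
  {in Q &, forall x y, sm (bl x) (bl y) -> bl x = bl y}.

Definition full_or_separated (Q : {set F}) : Prop := Q = setT \/ separated Q.

Lemma translation_moved_sep Q g x f :
  translation_on Q g -> separated Q -> x \in Q ->
  bl (g f) <> bl f -> sm (bl f) (bl x) -> bl f = bl x.
Proof.
move=> gQ sepQ xQ /(translation_moved gQ) /imsetP [y yQ ->] yx.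
exact: sepQ.
Qed.

Lemma translation_setT_fix g Q :
  translation_on setT g -> translation_on Q g -> separated Q -> {in Q, g =1 id}.
Proof.
move=> gT gQ sepQ z zQ.
apply: (corresponds_blk_inj (translation_corresponds gQ z) (corresponds_refl z)).
apply: NNPP => moved_z; have [x Ex] := blk_ne I (bl (g z)).
have moved_x : bl (g x) <> bl x.
  move=> fixed_x; apply: moved_z; rewrite -Ex.
  by apply: (translation_blk_inj gT (in_setT x) (in_setT z)); rewrite fixed_x Ex.
apply: moved_z; rewrite -Ex; apply: (translation_moved_sep gQ sepQ zQ moved_x).
by rewrite Ex; apply: sim_sym; exact: translation_sim gQ z.
Qed.

Lemma translates_setT_fix g Q Q' :
  translation_on setT g -> translates g Q Q' -> full_or_separated Q -> Q' = Q.
Proof.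
move=> gT gQQ' [QT | sepQ]; first by rewrite QT; apply/(translates_setT gQQ').
case: gQQ' => gQ ->.
by rewrite (eq_in_imset (translation_setT_fix gT gQ sepQ)) imset_id.
Qed.

Section Swap.
Variables (c1 : {set F}) (g h : F -> F).
Hypotheses (gc1 : translation_on c1 g) (hc1 : translation_on c1 h).

Definition swapU : {set 'I_k * 'I_k} :=
  [set p | (p.1 != p.2) && [exists c in c1, (bl (g c) == p.1) && (bl (h c) == p.2)]].

Local Notation s := (transl I swapU).

Lemma mem_swapU i j :
  (i, j) \in swapU <-> i <> j /\ exists2 c, c \in c1 & bl (g c) = i /\ bl (h c) = j.
Proof.
rewrite inE /=; split.
  case/andP=> /eqP ij /exists_inP [c cc1 /andP [/eqP Eg /eqP Eh]].
  by split=> //; exists c.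
case=> /eqP ij [c cc1 [Eg Eh]]; rewrite ij /=; apply/exists_inP; exists c => //.
by rewrite Eg Eh !eqxx.
Qed.

Lemma swapU_valid : validU I swapU.
Proof.
split; [|split].
- case=> i j /mem_swapU [_ [c _ [<- <-]]] /=.
  exact: sim_trans (sim_sym (translation_sim gc1 c)) (translation_sim hc1 c).
- case=> i j [i' j'] /mem_swapU [_ [c cc1 [<- <-]]] /mem_swapU [_ [c' c'c1 [<- <-]]] /= Eg.
  by rewrite (translation_blk hc1 (translation_blk_inj gc1 cc1 c'c1 Eg)) Eg.
- case=> i j [i' j'] /mem_swapU [_ [c cc1 [<- <-]]] /mem_swapU [_ [c' c'c1 [<- <-]]] /= Eh.
  by rewrite (translation_blk gc1 (translation_blk_inj hc1 cc1 c'c1 Eh)) Eh.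
Qed.

Lemma swapU_blk c : c \in c1 -> bl (s (g c)) = bl (h c).
Proof.
move=> cc1; have [Egh | /eqP Ngh] := eqVneq (bl (g c)) (bl (h c)).
  rewrite -Egh transl_out //; apply/negP => /mem_src [t /mem_swapU [Nt [c' c'c1 [Eg' Eh']]]].
  have Ec := translation_blk_inj gc1 c'c1 cc1 Eg'.
  by apply: Nt; rewrite -Eh' (translation_blk hc1 Ec) -Egh.
by apply: (transl_blk_in swapU_valid); apply/mem_swapU; split => //; exists c.
Qed.

Lemma swapU_comp c : c \in c1 -> s (g c) = h c.
Proof.
move=> cc1; apply: corresponds_blk_inj (swapU_blk cc1).
- exact: corresponds_trans (translation_corresponds gc1 c) (transl_corresponds swapU_valid _).
- exact: translation_corresponds hc1 c.
Qed.

Lemma swapU_translates : translates s (g @: c1) (h @: c1).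
Proof.
split; last by rewrite -imset_comp; apply: eq_in_imset => c cc1 /=; rewrite swapU_comp.
exists swapU => //; split; first exact: swapU_valid.
  apply/subsetP => i /mem_src [j /mem_swapU [_ [c cc1 [<- _]]]].
  exact: imset_f (imset_f _ cc1).
apply/setP => j; rewrite in_set0 in_setI in_setD; apply/negP.
case/and3P => /mem_tgt [i /mem_swapU [Nij [c cc1 [Eg Eh]]]] nsrc.
case/imsetP => _ /imsetP [c' c'c1 ->] Ej.
have Eh' : bl (h c') = j by rewrite -swapU_blk // transl_out // -Ej.
have Ec := translation_blk_inj hc1 c'c1 cc1 (etrans Eh' (esym Eh)).
by apply: Nij; rewrite -Eg Ej (translation_blk gc1 Ec).
Qed.

Section Back.
Variables (d2 e2 : {set F}).
Hypotheses (gd2 : translation_on d2 g) (he2 : translation_on e2 h).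
Hypothesis Ec2 : g @: d2 = h @: e2.
Hypotheses (sep_c1 : separated c1) (sep_d2 : separated d2) (sep_e2 : separated e2).

Lemma matched_sim e d : h e = g d -> sm (bl e) (bl d).
Proof.
move=> Ehg; apply: sim_trans (translation_sim he2 e) _.
by rewrite Ehg; apply: sim_sym; exact: translation_sim gd2 d.
Qed.

Lemma matched_blk_image c e d :
  c \in c1 -> e \in e2 -> d \in d2 -> h e = g d -> bl (g c) = bl e -> bl (h c) = bl d.
Proof.
move=> cc1 ee2 dd2 Ehg Egc.
have sim_ce : sm (bl c) (bl e) by rewrite -Egc; exact: translation_sim gc1 c.
have sim_cd := sim_trans sim_ce (matched_sim Ehg).
have [fix_c | /eqP moved_c] := eqVneq (bl (g c)) (bl c).
  have Ece : bl c = bl e by rewrite -fix_c.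
  rewrite (translation_blk hc1 Ece) Ehg; apply: NNPP => moved_d.
  have Edc := translation_moved_sep gc1 sep_c1 cc1 moved_d (sim_sym sim_cd).
  by apply: moved_d; rewrite (translation_blk gc1 Edc) fix_c.
have Ecd := translation_moved_sep gd2 sep_d2 dd2 moved_c sim_cd.
rewrite -Ecd; apply: NNPP => moved_hc; apply: moved_c.
by rewrite Egc (translation_moved_sep he2 sep_e2 ee2 moved_hc sim_ce).
Qed.

Lemma matched_blk_off_image e d :
  e \in e2 -> d \in d2 -> h e = g d -> {in c1, forall c, bl (g c) != bl e} -> bl e = bl d.
Proof.
move=> ee2 dd2 Ehg Nc.
have [fix_e | /eqP moved_e] := eqVneq (bl (h e)) (bl e).
  have [fix_d | /eqP moved_d] := eqVneq (bl (g d)) (bl d); first by rewrite -fix_e Ehg.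
  have /imsetP [c cc1 Edc] := translation_moved gc1 moved_d.
  by move: (Nc c cc1); rewrite -(translation_blk gc1 Edc) -Ehg fix_e eqxx.
have /imsetP [c cc1 Eec] := translation_moved hc1 moved_e.
have moved_c : bl (g c) <> bl c by rewrite -Eec; apply/eqP; exact: Nc.
rewrite Eec; apply: (translation_moved_sep gd2 sep_d2 dd2 moved_c).
by rewrite -Eec; exact: matched_sim Ehg.
Qed.

Lemma swapU_matched e d : e \in e2 -> d \in d2 -> h e = g d -> s e = d.
Proof.
move=> ee2 dd2 Ehg.
have ed : corresponds e d.
  apply: corresponds_trans (translation_corresponds he2 e) _.
  by rewrite Ehg; apply: corresponds_sym; exact: translation_corresponds gd2 d.
apply: corresponds_blk_inj (transl_corresponds swapU_valid e) ed _.
have [/exists_inP [c cc1 /eqP Egc] | /exists_inPn Nc] :=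
  boolP [exists c in c1, bl (g c) == bl e].
  rewrite (transl_blk swapU_valid (esym Egc)) swapU_blk //.
  exact: matched_blk_image Egc.
rewrite transl_out; first exact: matched_blk_off_image.
apply/negP => /mem_src [t /mem_swapU [_ [c cc1 [Egc _]]]].
by move: (Nc c cc1); rewrite Egc eqxx.
Qed.

Lemma swapU_src_back : src swapU \subset blocks e2.
Proof.
apply/subsetP => i /mem_src [j /mem_swapU [Nij [c cc1 [Egc Ehc]]]].
have [fix_c | /eqP moved_c] := eqVneq (bl (g c)) (bl c).
  have moved_hc : bl (h c) <> bl c by rewrite Ehc -fix_c Egc => /esym /Nij.
  by rewrite -Egc fix_c; exact (translation_moved he2 moved_hc).
have /imsetP [d dd2 Ecd] := translation_moved gd2 moved_c.
have /imsetP [e ee2 Egh] : g d \in h @: e2 by rewrite -Ec2 imset_f.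
have Ehe : bl (h e) = i by rewrite -Egh -(translation_blk gd2 Ecd).
have fix_e : bl (h e) = bl e.
  apply: NNPP => moved_e; apply: Nij; rewrite -Ehc -Ehe; apply: (translation_blk hc1).
  apply: (translation_moved_sep hc1 sep_c1 cc1 moved_e).
  apply: sim_trans (translation_sim he2 e) _.
  by rewrite Ehe -Egc; apply: sim_sym; exact: translation_sim gc1 c.
by rewrite -Ehe fix_e imset_f.
Qed.

Lemma swapU_tgt_back : tgt swapU :&: (blocks e2 :\: src swapU) = set0.
Proof.
apply/setP => j; rewrite in_set0 in_setI in_setD; apply/negP.
case/and3P => /mem_tgt [i /mem_swapU [Nij [c cc1 [Egc Ehc]]]] nsrc /imsetP [e ee2 Eje].
have [fix_hc | /eqP moved_hc] := eqVneq (bl (h c)) (bl c); last first.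
  have sim_ce : sm (bl c) (bl e) by rewrite -Eje -Ehc; exact: translation_sim hc1 c.
  have Ece := translation_moved_sep he2 sep_e2 ee2 moved_hc sim_ce.
  by apply: moved_hc; rewrite Ehc Eje Ece.
have /imsetP [d dd2 Ehg] : h e \in g @: d2 by rewrite Ec2 imset_f.
have nsrc_e : bl e \notin src swapU by rewrite -Eje.
have Ede : bl d = bl e by rewrite -(swapU_matched ee2 dd2 Ehg) transl_out.
have Ecd : bl c = bl d by rewrite Ede -Eje -Ehc fix_hc.
apply: Nij; rewrite -Egc -Ehc (translation_blk gc1 Ecd) -Ehg.
by apply: (translation_blk hc1); rewrite -Ede -Ecd.
Qed.

Lemma swapU_translates_back : translates s e2 d2.
Proof.
split.
  exists swapU => //.
  by split; [exact: swapU_valid | exact: swapU_src_back | exact: swapU_tgt_back].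
apply/eqP; rewrite eqEsubset; apply/andP; split; apply/subsetP.
  move=> d dd2; have /imsetP [e ee2 Egh] : g d \in h @: e2 by rewrite -Ec2 imset_f.
  by rewrite -(swapU_matched ee2 dd2 (esym Egh)) imset_f.
move=> _ /imsetP [e ee2 ->]; have /imsetP [d dd2 Ehg] : h e \in g @: d2 by rewrite Ec2 imset_f.
by rewrite (swapU_matched ee2 dd2 Ehg).
Qed.

End Back.
End Swap.

Lemma translates_swap_degenerate c1 d1 e1 c2 d2 e2 g h :
  full_or_separated c1 -> full_or_separated d2 -> full_or_separated e2 ->
  translates g c1 d1 -> translates g d2 c2 -> translates h c1 e1 -> translates h e2 c2 ->
  c1 = setT \/ d2 = setT -> d1 = e1 /\ e2 = d2.
Proof.
move=> fs_c1 fs_d2 fs_e2 gc1 gd2 hc1 he2 [c1T | d2T].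
  have gT : translation_on setT g by rewrite -c1T; exact: gc1.1.
  have hT : translation_on setT h by rewrite -c1T; exact: hc1.1.
  split; first by rewrite (translates_setT gc1).2 // (translates_setT hc1).2.
  by rewrite -(translates_setT_fix gT gd2 fs_d2) (translates_setT_fix hT he2 fs_e2).
have e2T : e2 = setT by apply/(translates_setT he2)/(translates_setT gd2).
have gT : translation_on setT g by rewrite -d2T; exact: gd2.1.
have hT : translation_on setT h by rewrite -e2T; exact: he2.1.
split; last by rewrite e2T d2T.
by rewrite (translates_setT_fix gT gc1 fs_c1) (translates_setT_fix hT hc1 fs_c1).
Qed.

Lemma translates_swap c1 d1 e1 c2 d2 e2 g h :
  full_or_separated c1 -> full_or_separated d2 -> full_or_separated e2 ->
  translates g c1 d1 -> translates g d2 c2 -> translates h c1 e1 -> translates h e2 c2 ->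
  exists s, translates s d1 e1 /\ translates s e2 d2.
Proof.
move=> fs_c1 fs_d2 fs_e2 gc1 gd2 hc1 he2.
have [deg | /not_or_and [c1N d2N]] := classic (c1 = setT \/ d2 = setT).
  have [-> ->] := translates_swap_degenerate fs_c1 fs_d2 fs_e2 gc1 gd2 hc1 he2 deg.
  by exists id; split; exact: translates_id.
have e2N : e2 <> setT by move/(translates_setT he2)/(translates_setT gd2).
have sep Q : full_or_separated Q -> Q <> setT -> separated Q by case.
case: gc1 gd2 hc1 he2 => [gc1 ->] [gd2 Ec2] [hc1 ->] [he2 Ec2'].
exists (transl I (swapU c1 g h)); split; first exact: swapU_translates.
apply: swapU_translates_back (sep _ fs_c1 c1N) (sep _ fs_d2 d2N) (sep _ fs_e2 e2N) => //.
by rewrite -Ec2.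
Qed.

Lemma mem_phi_of S f : f \in phi_of I S <-> forall d, S d -> f \in piF I d.
Proof. by rewrite inE /pb; case: excluded_middle_informative. Qed.

Lemma phiN_full_or_separated X : full_or_separated (phiN I X).
Proof.
have [[d Xd] | noX] := classic (exists d, nat_ext I X d).
  right => f f' fX f'X sim_ff'; apply: NNPP => Nff'.
  move/negP: (cond1 d (cond5 sim_ff' Nff' erefl erefl)); apply; apply/subsetP => z.
  by rewrite !inE => /orP [] /eqP ->; [move: fX | move: f'X] => /mem_phi_of; apply.
left; apply/setP => f; rewrite in_setT; apply/mem_phi_of => d Xd.
by case: noX; exists d.
Qed.

Lemma delta_blocks X : delta I X = blocks (phiN I X).
Proof.
apply/setP => i; rewrite inE; apply/set0Pn/imsetP => [[f] | [f fX ->]].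
  by rewrite inE /blockF inE => /andP [/eqP <- fX]; exists f.
by exists f; rewrite inE /blockF inE eqxx.
Qed.

Lemma in_muP C D g : in_mu I C D g <-> translates g (phiN I C) (phiN I D).
Proof.
split.
  case=> U [validU_U [gU [ED [srcC tgtC]]]]; split.
    by exists U => //; split; rewrite -?delta_blocks.
  by rewrite ED; apply: eq_imset => f; rewrite gU.
case=> [[U [validU_U srcC tgtC] gU] ED]; exists U; rewrite !delta_blocks.
by do !split => //; rewrite ED; apply: eq_imset.
Qed.

End Translations.

Theorem proposition7 (C1 C2 D1 D2 E1 E2 : natural) :
  entails (AA C1 D1 D2 C2 :: AA C1 E1 E2 C2 :: nil) (AA D1 E1 E2 D2).
Proof.
move=> Dl F k I [sat_ax _].
have [g [/in_muP gC1D1 /in_muP gD2C2]] := sat_ax _ (or_introl erefl).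
have [h [/in_muP hC1E1 /in_muP hE2C2]] := sat_ax _ (or_intror (or_introl erefl)).
have [s [sD1E1 sE2D2]] := translates_swap (phiN_full_or_separated I C1)
  (phiN_full_or_separated I D2) (phiN_full_or_separated I E2) gC1D1 gD2C2 hC1E1 hE2C2.
by exists s; split; apply/in_muP.
Qed.
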